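(* Let $\mathsf{RCA}_0+B\Sigma^0_2$ be the base theory. Then $B\Sigma^0_3$ is equivalent to the following statement: for every $u\in\mathbb{N}$ and every function $h:u\times\mathbb{N}\to\mathbb{N}$ such that for every $x<u$ there is $m$ with $h(x,z)<m$ for infinitely many $z$, there is $M\in\mathbb{N}$ such that for every $x<u$, $h(x,z)<M$ for infinitely many $z$.
   Context: $\mathbb{N}$ denotes the first-order universe of a model of second-order arithmetic; $h$ ranges over functions (sets) of the model. $B\Sigma^0_n$ is the $\Sigma^0_n$ bounding (collection) scheme. *)

From Stdlib Require Import Arith.

Record L2model := {
  num : Type;
  set : Type;
  zero : num;
  one : num;
  add : num -> num -> num;
  mul : num -> num -> num;
  lt : num -> num -> Prop;
  mem : num -> set -> Prop
}.

(* Number terms; variables are de Bruijn indices into the number environment. *)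
Inductive term : Type :=
| tvar : nat -> term
| tzero : term
| tone : term
| tadd : term -> term -> term
| tmul : term -> term -> term.

(* Number and set variables are de Bruijn indices into two
   separate environments.  [fball t f] is (forall x < t, f) and [fbex t f] is
   (exists x < t, f), where t is read in the outer context and x is index 0 in f. *)
Inductive form : Type :=
| feq : term -> term -> form
| flt : term -> term -> form
| fmem : term -> nat -> form
| fnot : form -> form
| fand : form -> form -> form
| f_or : form -> form -> form
| fimp : form -> form -> form
| fall : form -> form
| fex : form -> form
| fball : term -> form -> form
| fbex : term -> form -> form
| fSall : form -> form
| fSex : form -> form.

Definition scons {A : Type} (a : A) (e : nat -> A) : nat -> A :=
  fun n => match n with 0 => a | S k => e k end.

Fixpoint evalt (M : L2model) (rho : nat -> num M) (t : term) : num M :=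
  match t with
  | tvar n => rho n
  | tzero => zero M
  | tone => one M
  | tadd a b => add M (evalt M rho a) (evalt M rho b)
  | tmul a b => mul M (evalt M rho a) (evalt M rho b)
  end.

Fixpoint sat (M : L2model) (rho : nat -> num M) (sg : nat -> set M) (f : form)
  : Prop :=
  match f with
  | feq a b => evalt M rho a = evalt M rho b
  | flt a b => lt M (evalt M rho a) (evalt M rho b)
  | fmem a X => mem M (evalt M rho a) (sg X)
  | fnot g => ~ sat M rho sg g
  | fand g h => sat M rho sg g /\ sat M rho sg h
  | f_or g h => sat M rho sg g \/ sat M rho sg h
  | fimp g h => sat M rho sg g -> sat M rho sg h
  | fall g => forall n, sat M (scons n rho) sg g
  | fex g => exists n, sat M (scons n rho) sg g
  | fball t g => forall n, lt M n (evalt M rho t) -> sat M (scons n rho) sg g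
  | fbex t g => exists n, lt M n (evalt M rho t) /\ sat M (scons n rho) sg g
  | fSall g => forall X, sat M rho (scons X sg) g
  | fSex g => exists X, sat M rho (scons X sg) g
  end.

Inductive bounded : form -> Prop :=
| b_eq a b : bounded (feq a b)
| b_lt a b : bounded (flt a b)
| b_mem a X : bounded (fmem a X)
| b_not g : bounded g -> bounded (fnot g)
| b_and g h : bounded g -> bounded h -> bounded (fand g h)
| b_or g h : bounded g -> bounded h -> bounded (f_or g h)
| b_imp g h : bounded g -> bounded h -> bounded (fimp g h)
| b_ball t g : bounded g -> bounded (fball t g)
| b_bex t g : bounded g -> bounded (fbex t g).

Inductive Sigma : nat -> form -> Prop :=
| Sigma_0 f : bounded f -> Sigma 0 f
| Sigma_ex n f : Sigma (S n) f -> Sigma (S n) (fex f)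
| Sigma_Pi n f : Pi n f -> Sigma (S n) f
with Pi : nat -> form -> Prop :=
| Pi_0 f : bounded f -> Pi 0 f
| Pi_all n f : Pi (S n) f -> Pi (S n) (fall f)
| Pi_Sigma n f : Sigma n f -> Pi (S n) f.

(* Basic axioms of first-order arithmetic (Simpson, SOSOA I.2.4 (i)). *)
Definition basic_axioms (M : L2model) : Prop :=
  (forall m : num M, add M m (one M) <> zero M) /\
  (forall m n : num M, add M m (one M) = add M n (one M) -> m = n) /\
  (forall m : num M, add M m (zero M) = m) /\
  (forall m n : num M, add M m (add M n (one M)) = add M (add M m n) (one M)) /\
  (forall m : num M, mul M m (zero M) = zero M) /\
  (forall m n : num M, mul M m (add M n (one M)) = add M (mul M m n) m) /\
  (forall m : num M, ~ lt M m (zero M)) /\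
  (forall m n : num M, lt M m (add M n (one M)) <-> (lt M m n \/ m = n)).

Definition Sigma1_IND (M : L2model) : Prop :=
  forall f, Sigma 1 f -> forall rho sg,
    sat M (scons (zero M) rho) sg f ->
    (forall n, sat M (scons n rho) sg f -> sat M (scons (add M n (one M)) rho) sg f) ->
    forall n, sat M (scons n rho) sg f.

Definition Delta1_CA (M : L2model) : Prop :=
  forall f g, Sigma 1 f -> Pi 1 g -> forall rho sg,
    (forall n, sat M (scons n rho) sg f <-> sat M (scons n rho) sg g) ->
    exists X : set M, forall n, mem M n X <-> sat M (scons n rho) sg f.

Definition RCA0 (M : L2model) : Prop :=
  basic_axioms M /\ Sigma1_IND M /\ Delta1_CA M.

(* B Sigma^0_k: forall a, (forall i < a, exists j, phi(i,j)) ->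
   exists b, forall i < a, exists j < b, phi(i,j), for phi in Sigma^0_k
   (variable 0 = j, variable 1 = i, higher indices = parameters). *)
Definition BSigma (k : nat) (M : L2model) : Prop :=
  forall f, Sigma k f -> forall rho sg (a : num M),
    (forall i, lt M i a -> exists j, sat M (scons j (scons i rho)) sg f) ->
    exists b, forall i, lt M i a ->
      exists j, lt M j b /\ sat M (scons j (scons i rho)) sg f.

Definition pairM (M : L2model) (a b : num M) : num M :=
  add M (mul M (add M a b) (add M a b)) a.

(* H codes a function h : u x N -> N  (a set of pairs ((x,z),y)). *)
Definition is_fun2 (M : L2model) (u : num M) (H : set M) : Prop :=
  (forall w, mem M w H -> exists x z y, w = pairM M (pairM M x z) y /\ lt M x u) /\
  (forall x z, lt M x u -> exists y, mem M (pairM M (pairM M x z) y) H /\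
     forall y', mem M (pairM M (pairM M x z) y') H -> y' = y).

Definition val_lt (M : L2model) (H : set M) (x z m : num M) : Prop :=
  exists y, mem M (pairM M (pairM M x z) y) H /\ lt M y m.

Definition inf_often_lt (M : L2model) (H : set M) (x m : num M) : Prop :=
  forall k, exists z, lt M k z /\ val_lt M H x z m.

Definition uniform_bound_principle (M : L2model) : Prop :=
  forall (u : num M) (H : set M), is_fun2 M u H ->
    (forall x, lt M x u -> exists m, inf_often_lt M H x m) ->
    exists Mb, forall x, lt M x u -> inf_often_lt M H x Mb.

From Stdlib Require Import Arith Lia Classical FunctionalExtensionality Setoid.

(* B Sigma^0_3 gives the uniform bound principle directly, applied to the
   Pi^0_2 formula "h(x, z) < m for infinitely many z".

   Conversely, write a Sigma^0_3 formula as exists t, forall z, exists w, th.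
   Call a tuple t progressing at stage s when, checking the Pi^0_2 part on the
   inputs z < k with witnesses w < s, a new k <= s+1 is covered at stage s+1.
   By B Sigma^0_2, a true Pi^0_2 statement progresses at unboundedly many
   stages and a false one only below some stage.  Let h(x, s) be the least y
   such that y = s or some t < y progresses at stage s (with parameter x).  If
   x has a witness below e then h(x, s) <= e infinitely often, so the principle
   yields a bound Mb with h(x, s) < Mb infinitely often for every x < u.  By
   B Sigma^0_2 applied uniformly to the tuples below Mb, if none of them were
   a witness, none would progress after some stage, and h(x, s) = s would
   eventually exceed Mb; hence every x < u has a witness below Mb. *)

(** * Renaming and block quantifiers *)

Fixpoint ren_term (xi : nat -> nat) (t : term) : term :=
  match t with
  | tvar n => tvar (xi n)
  | tzero => tzero
  | tone => tone
  | tadd a b => tadd (ren_term xi a) (ren_term xi b)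
  | tmul a b => tmul (ren_term xi a) (ren_term xi b)
  end.

Definition up_ren (xi : nat -> nat) : nat -> nat :=
  fun n => match n with 0 => 0 | S k => S (xi k) end.

Fixpoint ren_form (xi : nat -> nat) (f : form) : form :=
  match f with
  | feq a b => feq (ren_term xi a) (ren_term xi b)
  | flt a b => flt (ren_term xi a) (ren_term xi b)
  | fmem a X => fmem (ren_term xi a) X
  | fnot g => fnot (ren_form xi g)
  | fand g h => fand (ren_form xi g) (ren_form xi h)
  | f_or g h => f_or (ren_form xi g) (ren_form xi h)
  | fimp g h => fimp (ren_form xi g) (ren_form xi h)
  | fall g => fall (ren_form (up_ren xi) g)
  | fex g => fex (ren_form (up_ren xi) g)
  | fball t g => fball (ren_term xi t) (ren_form (up_ren xi) g)
  | fbex t g => fbex (ren_term xi t) (ren_form (up_ren xi) g)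
  | fSall g => fSall (ren_form xi g)
  | fSex g => fSex (ren_form xi g)
  end.

Lemma evalt_ren M rho xi t :
  evalt M rho (ren_term xi t) = evalt M (fun n => rho (xi n)) t.
Proof. induction t; simpl; congruence. Qed.

Lemma scons_up_ren {A} (x : A) rho xi :
  (fun n => scons x rho (up_ren xi n)) = scons x (fun n => rho (xi n)).
Proof. extensionality n; destruct n; reflexivity. Qed.

Lemma sat_ren M f : forall xi rho sg,
  sat M rho sg (ren_form xi f) <-> sat M (fun n => rho (xi n)) sg f.
Proof.
  induction f; intros xi rho sg; simpl; rewrite ?evalt_ren; try tauto.
  - rewrite IHf; tauto.
  - rewrite IHf1, IHf2; tauto.
  - rewrite IHf1, IHf2; tauto.
  - rewrite IHf1, IHf2; tauto.
  - split; intros H n; specialize (H n); rewrite IHf, scons_up_ren in *; auto.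
  - split; intros [n H]; exists n; rewrite IHf, scons_up_ren in *; auto.
  - split; intros H n Hn; specialize (H n Hn); rewrite IHf, scons_up_ren in *; auto.
  - split; intros [n [Hn H]]; exists n; split; auto; rewrite IHf, scons_up_ren in *; auto.
  - split; intros H X; specialize (H X); rewrite IHf in *; auto.
  - split; intros [X H]; exists X; rewrite IHf in *; auto.
Qed.

Lemma bounded_ren f xi : bounded f -> bounded (ren_form xi f).
Proof. intros H; revert xi; induction H; intros xi; simpl; constructor; auto. Qed.

(* [prepend n t E] is the environment t 0, ..., t (n-1), E 0, E 1, ...; the
   variable bound by the innermost of n nested quantifiers is t 0. *)
Definition prepend {A} (n : nat) (t : nat -> A) (E : nat -> A) : nat -> A :=
  fun m => if m <? n then t m else E (m - n).

Definition snoc {A} (n : nat) (t : nat -> A) (x : A) : nat -> A :=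
  fun m => if m <? n then t m else x.

Lemma prepend_scons {A} n t (x : A) E :
  prepend n t (scons x E) = prepend (S n) (snoc n t x) E.
Proof.
  extensionality m; unfold prepend, snoc.
  destruct (Nat.ltb_spec m n), (Nat.ltb_spec m (S n)); try lia; auto.
  - replace (m - n) with 0 by lia; reflexivity.
  - replace (m - n) with (S (m - S n)) by lia; reflexivity.
Qed.

Lemma prepend_S {A} n t (E : nat -> A) :
  prepend (S n) t E = prepend n t (scons (t n) E).
Proof.
  rewrite prepend_scons. extensionality m; unfold prepend, snoc.
  destruct (Nat.ltb_spec m (S n)), (Nat.ltb_spec m n); auto.
  f_equal; lia.
Qed.

Lemma prepend_0 {A} t (E : nat -> A) : prepend 0 t E = E.
Proof. extensionality m; unfold prepend; simpl; f_equal; lia. Qed.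

Lemma prepend_lt {A} n t (E : nat -> A) m : m < n -> prepend n t E m = t m.
Proof. intros; unfold prepend. destruct (Nat.ltb_spec m n); [auto|lia]. Qed.

Lemma prepend_ge {A} n t (E : nat -> A) k m : m = k + n -> prepend n t E m = E k.
Proof.
  intros ->; unfold prepend. destruct (Nat.ltb_spec (k + n) n); [lia|].
  f_equal; lia.
Qed.

Lemma prepend_add {A} n t (E : nat -> A) k : prepend n t E (k + n) = E k.
Proof. apply prepend_ge; reflexivity. Qed.

Definition lift_ren (n : nat) (g : nat -> nat) (m : nat) : nat :=
  if m <? n then m else n + g (m - n).

Lemma prepend_lift_ren {A} n t (E : nat -> A) g :
  (fun m => prepend n t E (lift_ren n g m)) = prepend n t (fun m => E (g m)).
Proof.
  extensionality m; unfold lift_ren. destruct (Nat.ltb_spec m n).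
  - rewrite !prepend_lt; auto.
  - rewrite (prepend_ge n t E (g (m - n))), (prepend_ge n t _ (m - n)) by lia.
    reflexivity.
Qed.

Fixpoint fexs n g := match n with 0 => g | S n => fex (fexs n g) end.
Fixpoint falls n g := match n with 0 => g | S n => fall (falls n g) end.

(* Bounded blocks: [fbexs n B g] quantifies n variables, each below the
   variable that has index B outside the block. *)
Fixpoint fbexs n B g :=
  match n with 0 => g | S n => fbex (tvar B) (fbexs n (S B) g) end.
Fixpoint fballs n B g :=
  match n with 0 => g | S n => fball (tvar B) (fballs n (S B) g) end.

Definition tuple_lt (M : L2model) n (t : nat -> num M) B :=
  forall m, m < n -> lt M (t m) B.

Lemma tuple_lt_snoc M n t x B :
  tuple_lt M n t B -> lt M x B -> tuple_lt M (S n) (snoc n t x) B.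
Proof. intros H1 H2 m Hm; unfold snoc. destruct (Nat.ltb_spec m n); auto. Qed.

Lemma tuple_lt_S M n t B :
  tuple_lt M (S n) t B -> tuple_lt M n t B /\ lt M (t n) B.
Proof. intros H; split; [intros m Hm; apply H; lia | apply H; lia]. Qed.

Lemma sat_fexs M n g : forall rho sg,
  sat M rho sg (fexs n g) <-> exists t, sat M (prepend n t rho) sg g.
Proof.
  induction n; intros rho sg; simpl.
  - setoid_rewrite prepend_0. firstorder.
  - split.
    + intros [x H]; apply IHn in H as [t H].
      exists (snoc n t x); rewrite <- prepend_scons; auto.
    + intros [t H]; exists (t n); apply IHn; exists t; rewrite <- prepend_S; auto.
Qed.

Lemma sat_falls M n g : forall rho sg,
  sat M rho sg (falls n g) <-> forall t, sat M (prepend n t rho) sg g.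
Proof.
  induction n; intros rho sg; simpl.
  - setoid_rewrite prepend_0. firstorder.
  - split.
    + intros H t; rewrite prepend_S; apply (IHn (scons (t n) rho)); auto.
    + intros H x; apply IHn; intros t; rewrite prepend_scons; auto.
Qed.

Lemma sat_fbexs M n g : forall B rho sg,
  sat M rho sg (fbexs n B g) <->
  exists t, tuple_lt M n t (rho B) /\ sat M (prepend n t rho) sg g.
Proof.
  induction n; intros B rho sg; simpl.
  - setoid_rewrite prepend_0.
    split; [intros H; exists rho; split; auto; intros m Hm; lia | firstorder].
  - split.
    + intros [x [Hx H]]; apply IHn in H as [t [Ht H]]; simpl in Ht.
      exists (snoc n t x); split; [apply tuple_lt_snoc; auto|].
      rewrite <- prepend_scons; auto.
    + intros [t [Ht H]]; apply tuple_lt_S in Ht as [Ht Hn]. exists (t n); split; auto.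
      apply IHn; exists t; split; [simpl; auto|]. rewrite <- prepend_S; auto.
Qed.

Lemma sat_fballs M n g : forall B rho sg,
  sat M rho sg (fballs n B g) <->
  forall t, tuple_lt M n t (rho B) -> sat M (prepend n t rho) sg g.
Proof.
  induction n; intros B rho sg; simpl.
  - setoid_rewrite prepend_0.
    split; [auto | intros H; apply (H rho); intros m Hm; lia].
  - split.
    + intros H t Ht; apply tuple_lt_S in Ht as [Ht Hn]. rewrite prepend_S.
      specialize (H (t n) Hn). rewrite IHn in H. apply H. simpl; auto.
    + intros H x Hx; rewrite IHn; intros t Ht; simpl in Ht. rewrite prepend_scons.
      apply H, tuple_lt_snoc; auto.
Qed.

Lemma bounded_fbexs n B g : bounded g -> bounded (fbexs n B g).
Proof. revert B; induction n; intros B H; simpl; auto; constructor; auto. Qed.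

Lemma bounded_fballs n B g : bounded g -> bounded (fballs n B g).
Proof. revert B; induction n; intros B H; simpl; auto; constructor; auto. Qed.

Lemma Sigma1_normal_form f : Sigma 1 f -> exists r th, bounded th /\ f = fexs r th.
Proof.
  intros H; remember 1 as k; induction H; try discriminate.
  - destruct IHSigma as [r [th [Hb ->]]]; auto. exists (S r), th; auto.
  - injection Heqk as ->. inversion H; subst. exists 0, f; auto.
Qed.

Lemma Pi2_normal_form f : Pi 2 f -> exists q r th, bounded th /\ f = falls q (fexs r th).
Proof.
  intros H; remember 2 as k; induction H; try discriminate.
  - destruct IHPi as [q [r [th [Hb ->]]]]; auto. exists (S q), r, th; auto.
  - injection Heqk as ->. apply Sigma1_normal_form in H as [r [th [Hb ->]]].
    exists 0, r, th; auto.
Qed.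

Lemma Sigma3_normal_form f :
  Sigma 3 f -> exists p q r th, bounded th /\ f = fexs p (falls q (fexs r th)).
Proof.
  intros H; remember 3 as k; induction H; try discriminate.
  - destruct IHSigma as [p [q [r [th [Hb ->]]]]]; auto. exists (S p), q, r, th; auto.
  - injection Heqk as ->. apply Pi2_normal_form in H as [q [r [th [Hb ->]]]].
    exists 0, q, r, th; auto.
Qed.

(** * Arithmetic in models of RCA_0 *)

Definition le (M : L2model) (x y : num M) : Prop := lt M x y \/ x = y.

Definition pair_term (a b : term) : term := tadd (tmul (tadd a b) (tadd a b)) a.

Section Model.

Variable M : L2model.
Hypothesis HR : RCA0 M.
(* RCA_0 says nothing about a model whose second-order universe is empty (its
   schemes quantify over set environments), so a set environment is fixed. *)
Variable sg : nat -> set M.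

Local Notation succ x := (add M x (one M)).
Local Notation zero := (zero M).

Local Ltac basic_axiom := destruct HR as [(?&?&?&?&?&?&?&?) _]; auto.

Lemma add0 m : add M m zero = m. Proof. basic_axiom. Qed.
Lemma addS m n : add M m (succ n) = succ (add M m n). Proof. basic_axiom. Qed.
Lemma mul0 m : mul M m zero = zero. Proof. basic_axiom. Qed.
Lemma mulS m n : mul M m (succ n) = add M (mul M m n) m. Proof. basic_axiom. Qed.
Lemma nlt0 m : ~ lt M m zero. Proof. basic_axiom. Qed.
Lemma ltS m n : lt M m (succ n) <-> lt M m n \/ m = n. Proof. basic_axiom. Qed.
Lemma succ_neq0 x : succ x <> zero. Proof. basic_axiom. Qed.

Lemma bounded_ind (phi : form) : bounded phi -> forall rho,
  sat M (scons zero rho) sg phi ->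
  (forall n, sat M (scons n rho) sg phi -> sat M (scons (succ n) rho) sg phi) ->
  forall n, sat M (scons n rho) sg phi.
Proof.
  intros Hb rho. destruct HR as [_ [HI _]].
  exact (HI phi (Sigma_Pi 0 phi (Pi_0 phi Hb)) rho sg).
Qed.

Local Ltac induction_on phi rho :=
  let H := fresh "HI" in
  pose proof (bounded_ind phi ltac:(repeat constructor) rho) as H; simpl in H.

Lemma lt_succ n : lt M n (succ n).
Proof. apply ltS; auto. Qed.

Lemma lt_trans x y z : lt M x y -> lt M y z -> lt M x z.
Proof.
  induction_on (fimp (flt (tvar 1) (tvar 2)) (fimp (flt (tvar 2) (tvar 0)) (flt (tvar 1) (tvar 0))))
    (scons x (scons y (fun _ => zero))).
  apply HI.
  - intros _ C; exfalso; eapply nlt0; eauto.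
  - intros n IH Hxy Hy. apply ltS in Hy as [Hy| ->]; apply ltS; auto.
Qed.

Lemma lt_succ_le_or_eq m n : lt M m n -> lt M (succ m) n \/ succ m = n.
Proof.
  revert n.
  induction_on (fimp (flt (tvar 1) (tvar 0))
    (f_or (flt (tadd (tvar 1) tone) (tvar 0)) (feq (tadd (tvar 1) tone) (tvar 0))))
    (scons m (fun _ => zero)).
  apply HI.
  - intros C; exfalso; eapply nlt0; eauto.
  - intros n IH Hm. apply ltS in Hm as [Hm| ->].
    + left. destruct (IH Hm) as [H| <-]; apply ltS; auto.
    + right; auto.
Qed.

Lemma lt_succ_mono m n : lt M m n -> lt M (succ m) (succ n).
Proof. intros H; destruct (lt_succ_le_or_eq m n H) as [H'| <-]; apply ltS; auto. Qed.

Lemma lt_irrefl n : ~ lt M n n.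
Proof.
  revert n. induction_on (fnot (flt (tvar 0) (tvar 0))) (fun _ : nat => zero).
  apply HI.
  - apply nlt0.
  - intros n IH C. apply ltS in C as [C|C].
    + apply IH. eapply lt_trans; [apply lt_succ|]; eauto.
    + apply IH. pattern n at 2; rewrite <- C. apply lt_succ.
Qed.

Lemma zero_le n : lt M zero n \/ zero = n.
Proof.
  revert n. induction_on (f_or (flt tzero (tvar 0)) (feq tzero (tvar 0))) (fun _ : nat => zero).
  apply HI; auto.
  intros n [H|H]; left; apply ltS; auto.
Qed.

Lemma trichotomy m n : lt M m n \/ m = n \/ lt M n m.
Proof.
  revert n.
  induction_on (f_or (flt (tvar 1) (tvar 0)) (f_or (feq (tvar 1) (tvar 0)) (flt (tvar 0) (tvar 1))))
    (scons m (fun _ => zero)).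
  apply HI.
  - destruct (zero_le m) as [H|H]; auto.
  - intros n [H|[H|H]].
    + left; apply ltS; auto.
    + left; apply ltS; auto.
    + destruct (lt_succ_le_or_eq n m H); auto.
Qed.

Lemma zero_or_succ n : n = zero \/ exists m, n = succ m.
Proof.
  revert n.
  induction_on (f_or (feq (tvar 0) tzero) (fbex (tvar 0) (feq (tvar 1) (tadd (tvar 0) tone))))
    (fun _ : nat => zero).
  intros n. destruct (HI (or_introl eq_refl)
    (fun k _ => or_intror (ex_intro _ k (conj (lt_succ k) eq_refl))) n) as [H1|[k [_ H2]]]; eauto.
Qed.

Lemma lt_succ_inv m n : lt M (succ m) (succ n) -> lt M m n.
Proof.
  intros H. destruct (trichotomy m n) as [H1|[H1|H1]]; auto.
  - subst; exfalso; eapply lt_irrefl; eauto.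
  - exfalso. apply (lt_irrefl (succ n)). eapply lt_trans; [apply lt_succ_mono; eauto|]; auto.
Qed.

Lemma le_refl x : le M x x. Proof. right; auto. Qed.
Lemma le_lt_trans x y z : le M x y -> lt M y z -> lt M x z.
Proof. intros [H| ->] H2; auto. eapply lt_trans; eauto. Qed.
Lemma lt_le_trans x y z : lt M x y -> le M y z -> lt M x z.
Proof. intros H [H2| <-]; auto. eapply lt_trans; eauto. Qed.
Lemma le_trans x y z : le M x y -> le M y z -> le M x z.
Proof. intros [H| ->] H2; auto. left; eapply lt_le_trans; eauto. Qed.
Lemma lt_succ_r x y : lt M x (succ y) <-> le M x y.
Proof. rewrite ltS; unfold le; tauto. Qed.
Lemma le_succ_lt x y : le M (succ x) y -> lt M x y.
Proof. intros H; eapply lt_le_trans; [apply lt_succ|]; eauto. Qed.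
Lemma lt_le_succ x y : lt M x y -> le M (succ x) y.
Proof. intros H; destruct (lt_succ_le_or_eq x y H); [left|right]; auto. Qed.
Lemma not_lt_le x y : ~ lt M x y -> le M y x.
Proof. intros H; destruct (trichotomy x y) as [?|[?|?]]; [tauto|right; auto|left; auto]. Qed.
Lemma le_zero x : le M x zero -> x = zero.
Proof. intros [H|H]; auto. exfalso; eapply nlt0; eauto. Qed.

Lemma upper_bound2 x y : exists z, le M x z /\ le M y z.
Proof.
  destruct (trichotomy x y) as [H|[->|H]]; [exists y | exists y | exists x];
    split; try apply le_refl; left; auto.
Qed.

Lemma tuple_lt_mono n t B B' : tuple_lt M n t B -> le M B B' -> tuple_lt M n t B'.
Proof. intros H HB m Hm; eapply lt_le_trans; eauto. Qed.

Lemma tuple_lt_exists n t : exists B, tuple_lt M n t B.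
Proof.
  induction n.
  - exists zero; intros m Hm; lia.
  - destruct IHn as [B HB]. destruct (upper_bound2 B (t n)) as [z [H1 H2]].
    exists (succ z). intros m Hm. apply lt_succ_r.
    destruct (Nat.eq_dec m n) as [->|Hne]; auto.
    left; eapply lt_le_trans; [apply HB; lia|]; auto.
Qed.

Lemma add0l n : add M zero n = n.
Proof.
  revert n. induction_on (feq (tadd tzero (tvar 0)) (tvar 0)) (fun _ : nat => zero).
  apply HI; [apply add0|]. intros n IH. rewrite addS, IH; auto.
Qed.

Lemma addSl m n : add M (succ m) n = succ (add M m n).
Proof.
  revert n.
  induction_on (feq (tadd (tadd (tvar 1) tone) (tvar 0)) (tadd (tadd (tvar 1) (tvar 0)) tone))
    (scons m (fun _ => zero)).
  apply HI; [rewrite !add0; auto|]. intros n IH. rewrite !addS, IH; auto.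
Qed.

Lemma add_comm m n : add M m n = add M n m.
Proof.
  revert n.
  induction_on (feq (tadd (tvar 1) (tvar 0)) (tadd (tvar 0) (tvar 1))) (scons m (fun _ => zero)).
  apply HI; [rewrite add0, add0l; auto|]. intros n IH. rewrite addS, addSl, IH; auto.
Qed.

Lemma add_assoc a b c : add M a (add M b c) = add M (add M a b) c.
Proof.
  revert c.
  induction_on (feq (tadd (tvar 1) (tadd (tvar 2) (tvar 0))) (tadd (tadd (tvar 1) (tvar 2)) (tvar 0)))
    (scons a (scons b (fun _ => zero))).
  apply HI; [rewrite !add0; auto|]. intros n IH. rewrite !addS, IH; auto.
Qed.

Lemma mul0l n : mul M zero n = zero.
Proof.
  revert n. induction_on (feq (tmul tzero (tvar 0)) tzero) (fun _ : nat => zero).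
  apply HI; [apply mul0|]. intros n IH. rewrite mulS, IH, add0; auto.
Qed.

Lemma mulSl m n : mul M (succ m) n = add M (mul M m n) n.
Proof.
  revert n.
  induction_on (feq (tmul (tadd (tvar 1) tone) (tvar 0)) (tadd (tmul (tvar 1) (tvar 0)) (tvar 0)))
    (scons m (fun _ => zero)).
  apply HI; [rewrite !mul0, add0; auto|]. intros n IH. rewrite !mulS, IH, !addS.
  f_equal. rewrite <- !add_assoc. f_equal. apply add_comm.
Qed.

Lemma mul_comm m n : mul M m n = mul M n m.
Proof.
  revert n.
  induction_on (feq (tmul (tvar 1) (tvar 0)) (tmul (tvar 0) (tvar 1))) (scons m (fun _ => zero)).
  apply HI; [rewrite mul0, mul0l; auto|]. intros n IH. rewrite mulS, mulSl, IH; auto.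
Qed.

Lemma lt_add_r a b c : lt M a b -> lt M (add M a c) (add M b c).
Proof.
  revert c.
  induction_on (fimp (flt (tvar 1) (tvar 2)) (flt (tadd (tvar 1) (tvar 0)) (tadd (tvar 2) (tvar 0))))
    (scons a (scons b (fun _ => zero))).
  apply HI; [rewrite !add0; auto|]. intros n IH H. rewrite !addS. apply lt_succ_mono; auto.
Qed.

Lemma le_add_r a c : le M a (add M a c).
Proof.
  revert c.
  induction_on (f_or (flt (tvar 1) (tadd (tvar 1) (tvar 0))) (feq (tvar 1) (tadd (tvar 1) (tvar 0))))
    (scons a (fun _ => zero)).
  intros c; apply HI.
  - rewrite add0; auto.
  - intros n IH. rewrite addS. left. apply ltS. destruct IH; auto.
Qed.

Lemma le_add_l a c : le M a (add M c a).
Proof. rewrite add_comm; apply le_add_r. Qed.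

Lemma add_cancel_r a b c : add M a c = add M b c -> a = b.
Proof.
  intros H. destruct (trichotomy a b) as [H1|[H1|H1]]; auto; exfalso;
    apply (lt_add_r _ _ c) in H1; rewrite H in H1; eapply lt_irrefl; eauto.
Qed.

Lemma le_add_mono a b c : le M a b -> le M (add M a c) (add M b c).
Proof. intros [H| ->]; [left; apply lt_add_r; auto|right; auto]. Qed.

Lemma le_mul_mono_r z x y : le M x y -> le M (mul M z x) (mul M z y).
Proof.
  revert y.
  induction_on (fimp (f_or (flt (tvar 1) (tvar 0)) (feq (tvar 1) (tvar 0)))
     (f_or (flt (tmul (tvar 2) (tvar 1)) (tmul (tvar 2) (tvar 0)))
           (feq (tmul (tvar 2) (tvar 1)) (tmul (tvar 2) (tvar 0)))))
    (scons x (scons z (fun _ => zero))).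
  apply HI; fold (le M x) (le M (mul M z x)).
  - intros H0. apply le_zero in H0. subst. apply le_refl.
  - intros n IH [H1|H1].
    + apply lt_succ_r in H1. eapply le_trans; [apply IH; auto|].
      rewrite mulS. apply le_add_r.
    + subst; apply le_refl.
Qed.

Lemma le_square n : le M n (mul M n n).
Proof.
  destruct (zero_or_succ n) as [->|[m ->]].
  - rewrite mul0; apply le_refl.
  - rewrite mulS. apply le_add_l.
Qed.

Lemma le_square_mono x y : le M x y -> le M (mul M x x) (mul M y y).
Proof.
  intros H. eapply le_trans; [apply (le_mul_mono_r x x y H)|].
  rewrite (mul_comm x y). apply le_mul_mono_r; auto.
Qed.

(* The step (s+1)^2 = s^2 + 2s + 1 > s^2 + a for a <= s separates the
   diagonals of the pairing function. *)
Lemma lt_square_add a s c t : le M a s -> lt M s t ->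
  lt M (add M (mul M s s) a) (add M (mul M t t) c).
Proof.
  intros Ha Hst.
  apply lt_le_trans with (mul M t t); [|apply le_add_r].
  apply lt_le_trans with (mul M (succ s) (succ s)); [|apply le_square_mono, lt_le_succ; auto].
  rewrite mulS, mulSl, addS.
  apply le_lt_trans with (add M (add M (mul M s s) s) s); [|apply lt_succ].
  eapply le_trans; [|apply le_add_r].
  rewrite (add_comm _ a), (add_comm _ s). apply le_add_mono; auto.
Qed.

Lemma pairM_inj a b c d : pairM M a b = pairM M c d -> a = c /\ b = d.
Proof.
  unfold pairM; intros H.
  assert (E : add M a b = add M c d).
  { destruct (trichotomy (add M a b) (add M c d)) as [H1|[H1|H1]]; auto; exfalso.
    - apply (lt_square_add a _ c _ (le_add_r a b)) in H1.
      rewrite H in H1. eapply lt_irrefl; eauto.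
    - apply (lt_square_add c _ a _ (le_add_r c d)) in H1.
      rewrite H in H1. eapply lt_irrefl; eauto. }
  rewrite E, (add_comm _ a), (add_comm _ c) in H. apply add_cancel_r in H. subst.
  split; auto. rewrite (add_comm c b), (add_comm c d) in E. apply add_cancel_r in E; auto.
Qed.

Lemma le_pairM_l a b : le M a (pairM M a b).
Proof. apply le_add_l. Qed.

Lemma le_pairM_r a b : le M b (pairM M a b).
Proof.
  unfold pairM. eapply le_trans; [apply le_add_l with (c := a)|].
  eapply le_trans; [apply le_square|]. apply le_add_r.
Qed.

Lemma least_number phi : bounded phi -> forall G e0, sat M (scons e0 G) sg phi ->
  exists e, sat M (scons e G) sg phi /\
    forall e', lt M e' e -> ~ sat M (scons e' G) sg phi.
Proof.
  intros Hb G e0 H0.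
  set (ren1 := fun m => match m with 0 => 0 | S m' => S (S m') end).
  set (ren2 := fun m => match m with 0 => 0 | S m' => S (S (S m')) end).
  set (Phi := fimp (fbex (tvar 0) (ren_form ren1 phi))
    (fbex (tvar 0) (fand (ren_form ren1 phi) (fball (tvar 0) (fnot (ren_form ren2 phi)))))).
  assert (HPhi : forall n, sat M (scons n G) sg Phi <->
     ((exists e, lt M e n /\ sat M (scons e G) sg phi) ->
      exists e, lt M e n /\ sat M (scons e G) sg phi /\
        forall e', lt M e' e -> ~ sat M (scons e' G) sg phi)).
  { intros n. unfold Phi. simpl. setoid_rewrite sat_ren.
    assert (E1 : forall e, (fun k => scons e (scons n G) (ren1 k)) = scons e G)
      by (intros e; extensionality k; destruct k; reflexivity).
    assert (E2 : forall e e', (fun k => scons e' (scons e (scons n G)) (ren2 k)) = scons e' G)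
      by (intros e e'; extensionality k; destruct k; reflexivity).
    setoid_rewrite E1. setoid_rewrite E2. tauto. }
  assert (Hall : forall n, sat M (scons n G) sg Phi).
  { apply bounded_ind.
    - unfold Phi; repeat constructor; apply bounded_ren; auto.
    - rewrite HPhi. intros [e [He _]]. exfalso; eapply nlt0; eauto.
    - intros n IH. rewrite HPhi. rewrite HPhi in IH. intros [e [He Hs]].
      destruct (classic (exists e, lt M e n /\ sat M (scons e G) sg phi)) as [Hex|Hnex].
      + destruct (IH Hex) as [e' [H1 H2]]. exists e'; split; auto. apply ltS; auto.
      + exists n. split; [apply lt_succ|]. apply ltS in He as [He| ->].
        * exfalso; eauto.
        * split; [exact Hs|]. intros e' He' Hs'. apply Hnex. eauto. }
  destruct (proj1 (HPhi (succ e0)) (Hall _) (ex_intro _ e0 (conj (lt_succ e0) H0)))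
    as [e [_ He]].
  eauto.
Qed.

Section BSigma2.

Hypothesis B2 : BSigma 2 M.

Definition ren_past_block (n : nat) (m : nat) :=
  match m with
  | 0 => n
  | 1 => S n
  | S (S m') => if m' <? n then m' else S (S m')
  end.

Lemma prepend_ren_past_block n (t : nat -> num M) v c x G :
  (fun m => prepend n t (scons v (scons c (scons x G))) (ren_past_block n m)) =
  scons v (scons c (prepend n t (scons x G))).
Proof.
  extensionality m. destruct m as [|[|m]]; simpl.
  - rewrite (prepend_ge _ _ _ 0); auto.
  - rewrite (prepend_ge _ _ _ 1); auto.
  - destruct (Nat.ltb_spec m n).
    + rewrite !prepend_lt; auto.
    + rewrite (prepend_ge _ _ _ (S (S (m - n)))) by lia.
      rewrite (prepend_ge _ _ _ (m - n)) by lia. reflexivity.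
Qed.

(* Induction on the length of t, applying B Sigma^0_2 to one coordinate at a
   time; monotonicity in c lets the collected bound replace the individual ones. *)
Lemma Pi1_collection_tuples phi : bounded phi ->
  (forall E v c c', sat M (scons v (scons c E)) sg phi -> le M c c' ->
     sat M (scons v (scons c' E)) sg phi) ->
  forall n G B,
  (forall t, tuple_lt M n t (G B) ->
     exists c, forall v, sat M (scons v (scons c (prepend n t G))) sg phi) ->
  exists c, forall t, tuple_lt M n t (G B) ->
     forall v, sat M (scons v (scons c (prepend n t G))) sg phi.
Proof.
  intros Hb Hmono n. induction n; intros G B H.
  - destruct (H (fun _ => zero)) as [c Hc]; [intros m Hm; lia|].
    exists c; intros t _ v. rewrite prepend_0 in *. apply Hc.
  - set (psi := fall (fballs n (S (S (S B))) (ren_form (ren_past_block n) phi))).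
    assert (Hpsi : Sigma 2 psi).
    { apply Sigma_Pi, Pi_all, Pi_Sigma, Sigma_0, bounded_fballs, bounded_ren; auto. }
    assert (Hsat : forall c x, sat M (scons c (scons x G)) sg psi <->
        forall v t, tuple_lt M n t (G B) ->
          sat M (scons v (scons c (prepend n t (scons x G)))) sg phi).
    { intros c x. unfold psi; simpl. setoid_rewrite sat_fballs. simpl.
      setoid_rewrite sat_ren. setoid_rewrite prepend_ren_past_block. firstorder. }
    destruct (B2 psi Hpsi G sg (G B)) as [b Hb'].
    + intros x Hx. destruct (IHn (scons x G) (S B)) as [c Hc].
      * intros t Ht. destruct (H (snoc n t x)) as [c Hc]; [apply tuple_lt_snoc; auto|].
        exists c. intros v. rewrite prepend_scons. apply Hc.
      * exists c. apply Hsat. intros v t Ht. apply Hc. simpl; auto.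
    + exists b. intros t Ht v. apply tuple_lt_S in Ht as [Ht Htn].
      destruct (Hb' (t n) Htn) as [c [Hc Hs]]. rewrite Hsat in Hs.
      rewrite prepend_S. eapply Hmono; [apply Hs; auto|]. left; auto.
Qed.

(** * Sigma^0_3 bounding from the uniform bound principle *)

Section Sigma3_prenex.

Variables p q r : nat.
Variable th : form.
Hypothesis Hth : bounded th.

(* The Sigma^0_3 formula is exists t, forall z, exists w, th with |t| = p+1,
   |z| = q, |w| = r.  [verified k s G]: the Pi^0_2 part holds at G for all
   z < k with witnesses w < s.  The tuple t progresses at stage s when some
   k <= s+1 becomes verified at s+1; the least candidate y at stage s is the
   value h(x, s) of the function built for the uniform bound principle. *)
Definition verified k s (G : nat -> num M) := lt M k (succ s) /\
  forall z, tuple_lt M q z k ->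
    exists w, tuple_lt M r w s /\ sat M (prepend r w (prepend q z G)) sg th.

Definition progress s G :=
  exists k, lt M k (succ (succ s)) /\ verified k (succ s) G /\ ~ verified k s G.

Definition candidate e s G :=
  e = s \/ exists t, tuple_lt M (S p) t e /\ progress s (prepend (S p) t G).

Definition least_candidate y s G :=
  candidate y s G /\ forall e, lt M e y -> ~ candidate e s G.

(* Formula versions: the arguments K, S0, Y, Ei are variable indices and the
   parameters G are read through the renaming g. *)
Definition verified_form K S0 g := fand (flt (tvar K) (tadd (tvar S0) tone))
  (fballs q K (fbexs r (S0 + q) (ren_form (lift_ren r (lift_ren q g)) th))).

Definition progress_form S0 g :=
  fbex (tadd (tadd (tvar S0) tone) tone) (fbex (tadd (tadd (tvar (S S0)) tone) tone)
   (fand (feq (tvar 0) (tadd (tvar (S (S S0))) tone))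
     (fand (verified_form 1 0 (fun m => S (S (g m))))
           (fnot (verified_form 1 (S (S S0)) (fun m => S (S (g m)))))))).

Definition candidate_form Ei S0 g := f_or (feq (tvar Ei) (tvar S0))
  (fbexs (S p) Ei (progress_form (S0 + S p) (lift_ren (S p) g))).

Definition least_candidate_form Y S0 g := fand (candidate_form Y S0 g)
  (fball (tvar Y) (fnot (candidate_form 0 (S S0) (fun m => S (g m))))).

Arguments verified_form : simpl never.
Arguments progress_form : simpl never.
Arguments candidate_form : simpl never.
Arguments least_candidate_form : simpl never.

Lemma sat_verified_form K S0 g E :
  sat M E sg (verified_form K S0 g) <-> verified (E K) (E S0) (fun m => E (g m)).
Proof.
  unfold verified_form, verified; simpl. rewrite sat_fballs. setoid_rewrite sat_fbexs.
  setoid_rewrite sat_ren. setoid_rewrite prepend_lift_ren. setoid_rewrite prepend_lift_ren.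
  setoid_rewrite prepend_add. tauto.
Qed.

Lemma sat_progress_form S0 g E :
  sat M E sg (progress_form S0 g) <-> progress (E S0) (fun m => E (g m)).
Proof.
  unfold progress_form, progress; cbn -[verified_form]. setoid_rewrite sat_verified_form.
  simpl. split.
  - intros [k [Hk [s' [_ [-> [H1 H2]]]]]]. exists k; auto.
  - intros [k [Hk [H1 H2]]]. exists k; split; auto.
    exists (succ (E S0)); split; auto. apply lt_succ.
Qed.

Lemma sat_candidate_form Ei S0 g E :
  sat M E sg (candidate_form Ei S0 g) <-> candidate (E Ei) (E S0) (fun m => E (g m)).
Proof.
  unfold candidate_form, candidate; cbn -[progress_form fbexs]. rewrite sat_fbexs.
  setoid_rewrite sat_progress_form. setoid_rewrite prepend_add.
  setoid_rewrite prepend_lift_ren. tauto.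
Qed.

Lemma sat_least_candidate_form Y S0 g E :
  sat M E sg (least_candidate_form Y S0 g) <->
  least_candidate (E Y) (E S0) (fun m => E (g m)).
Proof.
  unfold least_candidate_form, least_candidate; cbn -[candidate_form].
  setoid_rewrite sat_candidate_form. simpl. tauto.
Qed.

Lemma bounded_verified_form K S0 g : bounded (verified_form K S0 g).
Proof.
  unfold verified_form; constructor; [constructor|].
  apply bounded_fballs, bounded_fbexs, bounded_ren; auto.
Qed.

Lemma bounded_progress_form S0 g : bounded (progress_form S0 g).
Proof. unfold progress_form. repeat first [apply bounded_verified_form | constructor]. Qed.

Lemma bounded_candidate_form Ei S0 g : bounded (candidate_form Ei S0 g).
Proof.
  unfold candidate_form. constructor; [constructor|].
  apply bounded_fbexs, bounded_progress_form.
Qed.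

Lemma bounded_least_candidate_form Y S0 g : bounded (least_candidate_form Y S0 g).
Proof.
  unfold least_candidate_form.
  repeat first [apply bounded_candidate_form | constructor].
Qed.

Lemma verified_mono k s s' G : verified k s G -> le M s s' -> verified k s' G.
Proof.
  intros [Hk Hz] Hs. split.
  - apply lt_succ_r. eapply le_trans; eauto. apply lt_succ_r; auto.
  - intros z Hz'. destruct (Hz z Hz') as [w [Hw H]]. exists w; split; auto.
    eapply tuple_lt_mono; eauto.
Qed.

Lemma least_candidate_exists s G : exists y, least_candidate y s G.
Proof.
  set (g := fun m => S (S m)).
  assert (HC : forall e, sat M (scons e (scons s G)) sg (candidate_form 0 1 g) <->
    candidate e s G) by (intros e; rewrite sat_candidate_form; reflexivity).
  destruct (least_number _ (bounded_candidate_form 0 1 g) (scons s G) s) as [y [Hy Hmin]].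
  - apply HC. left; auto.
  - exists y. split; [apply HC; auto|]. intros e He Hc. apply (Hmin e He), HC; auto.
Qed.

Lemma least_candidate_unique y y' s G :
  least_candidate y s G -> least_candidate y' s G -> y = y'.
Proof.
  intros [H1 H2] [H3 H4].
  destruct (trichotomy y y') as [H|[H|H]]; auto; exfalso; [eapply H4 | eapply H2]; eauto.
Qed.

Lemma least_candidate_le y s G t e :
  least_candidate y s G -> tuple_lt M (S p) t e -> progress s (prepend (S p) t G) ->
  le M y e.
Proof.
  intros [_ Hmin] Ht Hp. apply not_lt_le. intros C. apply (Hmin e C). right; eauto.
Qed.

Definition witness_form :=
  fbexs r 1 (ren_form (lift_ren r (fun m => S (S (lift_ren q S m)))) th).

Lemma sat_witness_form v c E :
  sat M (scons v (scons c E)) sg witness_form <->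
  exists w, tuple_lt M r w c /\ sat M (prepend r w (fun m => E (lift_ren q S m))) sg th.
Proof.
  unfold witness_form. rewrite sat_fbexs. setoid_rewrite sat_ren.
  setoid_rewrite prepend_lift_ren. reflexivity.
Qed.

Lemma verified_eventually Gt :
  (forall z, exists w, sat M (prepend r w (prepend q z Gt)) sg th) ->
  forall k, exists s, verified k s Gt.
Proof.
  intros Htrue k.
  assert (Hb : bounded witness_form) by apply bounded_fbexs, bounded_ren, Hth.
  destruct (Pi1_collection_tuples witness_form Hb) with (n := q) (G := scons k Gt) (B := 0)
    as [c Hc].
  - intros E v c c' H Hcc. rewrite sat_witness_form in *. destruct H as [w [Hw H]].
    exists w; split; auto. eapply tuple_lt_mono; eauto.
  - intros z _. destruct (Htrue z) as [w Hw]. destruct (tuple_lt_exists r w) as [c Hc].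
    exists c. intros v. apply sat_witness_form. exists w; split; auto.
    rewrite prepend_lift_ren. exact Hw.
  - destruct (upper_bound2 c k) as [s [Hcs Hks]]. exists s.
    split; [apply lt_succ_r; auto|]. intros z Hz.
    destruct (proj1 (sat_witness_form _ _ _) (Hc z Hz zero)) as [w [Hw H]].
    rewrite prepend_lift_ren in H. exists w; split; auto. eapply tuple_lt_mono; eauto.
Qed.

(* The least stage at which k = B+2 is verified is a progress stage above B. *)
Lemma progress_above Gt B s :
  verified (succ (succ B)) s Gt -> exists s', lt M B s' /\ progress s' Gt.
Proof.
  intros Hs. set (k := succ (succ B)).
  assert (HV : forall s, sat M (scons s (scons k Gt)) sg (verified_form 1 0 (fun m => S (S m)))
    <-> verified k s Gt) by (intros; rewrite sat_verified_form; reflexivity).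
  destruct (least_number _ (bounded_verified_form 1 0 (fun m => S (S m))) (scons k Gt) s)
    as [s1 [Hs1 Hmin]]; [apply HV; auto|].
  apply HV in Hs1. destruct (zero_or_succ s1) as [->|[s' ->]].
  - exfalso. destruct Hs1 as [Hk _].
    apply ltS in Hk as [Hk|Hk]; [eapply nlt0 | eapply succ_neq0]; eauto.
  - exists s'. split.
    + destruct Hs1 as [Hk _]. apply lt_succ_r, le_succ_lt, lt_succ_inv in Hk; auto.
    + exists k. split; [exact (proj1 Hs1)|]. split; auto.
      intros C. apply (Hmin s' (lt_succ s')), HV; auto.
Qed.

Lemma progress_unbounded Gt :
  (forall z, exists w, sat M (prepend r w (prepend q z Gt)) sg th) ->
  forall B, exists s, lt M B s /\ progress s Gt.
Proof.
  intros Htrue B. destruct (verified_eventually Gt Htrue (succ (succ B))) as [s Hs].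
  exact (progress_above Gt B s Hs).
Qed.

Lemma progress_bounded Gt :
  (exists z, forall w, ~ sat M (prepend r w (prepend q z Gt)) sg th) ->
  exists b, forall s, lt M b s -> ~ progress s Gt.
Proof.
  intros [z0 Hz0]. destruct (tuple_lt_exists q z0) as [K HK].
  assert (Hnever : forall k s, le M K k -> ~ verified k s Gt).
  { intros k s Hk [_ H]. destruct (H z0 (tuple_lt_mono _ _ _ _ HK Hk)) as [w [_ Hw]].
    eapply Hz0; eauto. }
  (* psi(c, k): if k is ever verified, it is verified by stage c. *)
  set (psi := fall (f_or (fnot (verified_form 2 0 (fun m => S (S (S m)))))
                         (verified_form 2 1 (fun m => S (S (S m)))))).
  assert (Hpsi : Sigma 2 psi).
  { apply Sigma_Pi, Pi_all, Pi_Sigma, Sigma_0.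
    constructor; [constructor|]; apply bounded_verified_form. }
  assert (Hsat : forall c k, sat M (scons c (scons k Gt)) sg psi <->
             forall s, ~ verified k s Gt \/ verified k c Gt).
  { intros c k. unfold psi; cbn -[verified_form]. setoid_rewrite sat_verified_form.
    reflexivity. }
  destruct (B2 psi Hpsi Gt sg K) as [b Hb].
  - intros k _. destruct (classic (exists s, verified k s Gt)) as [[s Hs]|Hn].
    + exists s. apply Hsat. intros; right; auto.
    + exists zero. apply Hsat. intros s; left; intros C; apply Hn; eauto.
  - exists b. intros s Hs [k [Hk [H1 H2]]].
    destruct (classic (lt M k K)) as [Hlt|Hnlt].
    + destruct (Hb k Hlt) as [c [Hc Hv]]. rewrite Hsat in Hv.
      destruct (Hv (succ s)) as [C|C]; [tauto|].
      apply H2. eapply verified_mono; eauto. left. eapply lt_trans; eauto.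
    + apply (Hnever k (succ s)); auto. apply not_lt_le; auto.
Qed.

Definition no_progress_after_form :=
  fimp (flt (tvar 1) (tvar 0)) (fnot (progress_form 0 (fun m => S (S (lift_ren (S p) S m))))).

Lemma sat_no_progress_after_form v c E :
  sat M (scons v (scons c E)) sg no_progress_after_form <->
  (lt M c v -> ~ progress v (fun m => E (lift_ren (S p) S m))).
Proof.
  unfold no_progress_after_form. cbn -[progress_form]. rewrite sat_progress_form.
  reflexivity.
Qed.

(* If no tuple below Mb were a witness, B Sigma^0_2 would give a stage after
   which none of them progresses, and then every least candidate would be a
   stage s itself, eventually above Mb. *)
Lemma witness_below Mb G :
  (forall k, exists s, lt M k s /\ exists y, least_candidate y s G /\ lt M y Mb) ->
  exists t, tuple_lt M (S p) t Mb /\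
    forall z, exists w, sat M (prepend r w (prepend q z (prepend (S p) t G))) sg th.
Proof.
  intros Hio. apply NNPP. intros Hno.
  assert (Hstop : forall t, tuple_lt M (S p) t Mb ->
    exists c, forall s, lt M c s -> ~ progress s (prepend (S p) t G)).
  { intros t Ht. apply progress_bounded. apply NNPP. intros Hz. apply Hno.
    exists t. split; auto. intros z. apply NNPP. intros Hw. apply Hz.
    exists z. intros w Hw'. apply Hw. eauto. }
  assert (Hb : bounded no_progress_after_form)
    by (unfold no_progress_after_form; repeat first [apply bounded_progress_form | constructor]).
  destruct (Pi1_collection_tuples no_progress_after_form Hb)
    with (n := S p) (G := scons Mb G) (B := 0) as [c Hc].
  - intros E v c c' H Hcc. rewrite sat_no_progress_after_form in *.
    intros Hlt. apply H. eapply le_lt_trans; eauto.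
  - intros t Ht. destruct (Hstop t Ht) as [c Hc]. exists c. intros v.
    rewrite sat_no_progress_after_form, prepend_lift_ren. apply Hc.
  - destruct (upper_bound2 c Mb) as [B [HcB HMbB]].
    destruct (Hio B) as [s [Hs [y [[Hy _] Hym]]]].
    destruct Hy as [-> | [t [Ht Hp]]].
    + apply (lt_irrefl s). eapply lt_trans; [eapply lt_le_trans|]; eauto.
    + assert (Ht' : tuple_lt M (S p) t Mb) by (eapply tuple_lt_mono; eauto; left; auto).
      specialize (Hc t Ht' s). rewrite sat_no_progress_after_form, prepend_lift_ren in Hc.
      apply Hc; auto. eapply le_lt_trans; eauto.
Qed.

Lemma sat_Sigma3_prenex j i rho :
  sat M (scons j (scons i rho)) sg (fexs p (falls q (fexs r th))) <->
  exists t, t p = j /\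
    forall z, exists w, sat M (prepend r w (prepend q z (prepend (S p) t (scons i rho)))) sg th.
Proof.
  rewrite sat_fexs. setoid_rewrite sat_falls. setoid_rewrite sat_fexs. split.
  - intros [t Ht]. exists (snoc p t j).
    split; [unfold snoc; rewrite Nat.ltb_irrefl; auto|].
    rewrite <- prepend_scons. auto.
  - intros [t [<- Ht]]. exists t. rewrite <- prepend_S. auto.
Qed.

Lemma least_candidate_graph rho a : exists X, is_fun2 M a X /\
  forall x z y, mem M (pairM M (pairM M x z) y) X <->
    lt M x a /\ least_candidate y z (scons x rho).
Proof.
  set (g := fun m => match m with 0 => 2 | S m' => S (S (S (S (S m')))) end).
  set (graph := fbex (tadd (tvar 0) tone) (fbex (tadd (tvar 1) tone) (fbex (tadd (tvar 2) tone)
    (fand (feq (tvar 3) (pair_term (pair_term (tvar 2) (tvar 1)) (tvar 0)))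
      (fand (flt (tvar 2) (tvar 4)) (least_candidate_form 0 1 g)))))).
  assert (Hb : bounded graph)
    by (unfold graph; repeat first [apply bounded_least_candidate_form | constructor]).
  destruct HR as [_ [_ HD]].
  destruct (HD graph graph (Sigma_Pi 0 _ (Pi_0 _ Hb)) (Pi_Sigma 0 _ (Sigma_0 _ Hb))
    (scons a rho) sg (fun n => iff_refl _)) as [X HX].
  assert (Hmem : forall w, mem M w X <->
    exists x, lt M x (succ w) /\ exists z, lt M z (succ w) /\ exists y, lt M y (succ w) /\
      w = pairM M (pairM M x z) y /\ lt M x a /\ least_candidate y z (scons x rho)).
  { intros w. rewrite HX. unfold graph. cbn -[least_candidate_form].
    setoid_rewrite sat_least_candidate_form.
    assert (Hg : forall y z x,
      (fun m => scons y (scons z (scons x (scons w (scons a rho)))) (g m)) = scons x rho)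
      by (intros; extensionality m; destruct m; reflexivity).
    setoid_rewrite Hg. reflexivity. }
  assert (Hcode : forall x z y, mem M (pairM M (pairM M x z) y) X <->
    lt M x a /\ least_candidate y z (scons x rho)).
  { intros x z y. rewrite Hmem. split.
    - intros [x' [_ [z' [_ [y' [_ [E H]]]]]]].
      apply pairM_inj in E as [E1 <-]. apply pairM_inj in E1 as [<- <-]. auto.
    - intros H. pose proof (le_pairM_l (pairM M x z) y) as Hxz.
      exists x; split; [apply lt_succ_r; eapply le_trans; [apply le_pairM_l | eauto]|].
      exists z; split; [apply lt_succ_r; eapply le_trans; [apply le_pairM_r | eauto]|].
      exists y; split; [apply lt_succ_r, le_pairM_r|]. auto. }
  exists X. split; auto. split.
  - intros w Hw. apply Hmem in Hw as [x [_ [z [_ [y [_ [E [Hx _]]]]]]]]. eauto.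
  - intros x z Hx. destruct (least_candidate_exists z (scons x rho)) as [y Hy].
    exists y. split; [apply Hcode; auto|]. intros y' Hy'.
    apply Hcode in Hy' as [_ Hy']. eapply least_candidate_unique; eauto.
Qed.

Lemma bounding_Sigma3_prenex (U : uniform_bound_principle M) rho a :
  (forall i, lt M i a ->
     exists j, sat M (scons j (scons i rho)) sg (fexs p (falls q (fexs r th)))) ->
  exists b, forall i, lt M i a ->
     exists j, lt M j b /\ sat M (scons j (scons i rho)) sg (fexs p (falls q (fexs r th))).
Proof.
  intros Hyp. destruct (least_candidate_graph rho a) as [X [Hfun HX]].
  assert (Hbound : forall x, lt M x a -> exists m, inf_often_lt M X x m).
  { intros x Hx. destruct (Hyp x Hx) as [j Hj].
    apply sat_Sigma3_prenex in Hj as [t [_ Ht]].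
    destruct (tuple_lt_exists (S p) t) as [e He]. exists (succ e). intros k.
    destruct (progress_unbounded _ Ht k) as [s [Hks Hp]].
    destruct (least_candidate_exists s (scons x rho)) as [y Hy].
    exists s; split; auto. exists y; split; [apply HX; auto|].
    apply lt_succ_r. eapply least_candidate_le; eauto. }
  destruct (U a X Hfun Hbound) as [Mb HMb]. exists Mb. intros i Hi.
  destruct (witness_below Mb (scons i rho)) as [t [Ht Htrue]].
  - intros k. destruct (HMb i Hi k) as [s [Hks [y [Hy Hym]]]].
    exists s; split; auto. exists y; split; auto. apply HX in Hy as [_ Hy]; auto.
  - exists (t p). split; [apply Ht; lia|]. apply sat_Sigma3_prenex. eauto.
Qed.

End Sigma3_prenex.
End BSigma2.
End Model.

Lemma uniform_bound_of_BSigma3 (M : L2model) :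
  RCA0 M -> BSigma 3 M -> uniform_bound_principle M.
Proof.
  intros HR B3 u H Hf Hm.
  (* forall k, exists z y, k < z /\ ((x, z), y) in H /\ y < m, with x = var 1, m = var 0 *)
  set (f := fall (fex (fex (fand (flt (tvar 2) (tvar 1))
              (fand (fmem (pair_term (pair_term (tvar 4) (tvar 1)) (tvar 0)) 0)
                    (flt (tvar 0) (tvar 3))))))).
  assert (Hs : Sigma 3 f).
  { apply Sigma_Pi, Pi_all, Pi_Sigma, Sigma_ex, Sigma_ex, Sigma_Pi, Pi_0; repeat constructor. }
  destruct (B3 f Hs (fun _ => zero M) (fun _ => H) u) as [b Hb].
  - intros i Hi. destruct (Hm i Hi) as [m Hio]. exists m. intros k.
    destruct (Hio k) as [z [Hkz [y [Hy Hym]]]]. exists z, y. simpl. auto.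
  - exists b. intros x Hx k. destruct (Hb x Hx) as [j [Hj Hf']].
    simpl in Hf'. destruct (Hf' k) as [z [y [Hkz [Hy Hyj]]]].
    exists z; split; auto. exists y; split; auto. eapply (lt_trans M HR (fun _ => H)); eauto.
Qed.

Theorem mainTheorem7 :
  forall M : L2model, RCA0 M -> BSigma 2 M ->
    (BSigma 3 M <-> uniform_bound_principle M).
Proof.
  intros M HR B2. split.
  - apply uniform_bound_of_BSigma3; auto.
  - intros U f Hf rho sg a Hyp.
    destruct (Sigma3_normal_form f Hf) as [p [q [r [th [Hth ->]]]]].
    eapply bounding_Sigma3_prenex; eauto.
Qed.
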